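(* Let $c \geq 7$ be an integer, let $G$ be a graph, and let $v$ be a vertex of $G$ having a neighbor of degree $2$ or $3$. Let $Y=\{v\}\cup N_{G,1}(v)\cup N_{G,2}(v)\cup N_{G,3}(v)$. If $G$ has no PCF $c$-coloring, but $(G,Y)$ has a semi-PCF $c$-coloring, then $2d(v) - 2n_1(v) - n_2(v) - n_3(v) \geq c$.
   Context: $N_{G,d}(v)$ is the set of neighbors of $v$ of degree exactly $d$ in $G$, and $n_d(v)=|N_{G,d}(v)|$; $d(v)$ is the degree of $v$ in $G$. A PCF $c$-coloring of a graph is a proper coloring with at most $c$ colors in which every non-isolated vertex has a color appearing exactly once in its open neighborhood. For $Y\subseteq V(G)$, let $Z$ be the set of vertices of $G-Y$ having degree exactly $2$ in $G-Y$. A semi-PCF $c$-coloring of $(G,Y)$ is a proper $c$-coloring $\phi$ of $G-Y$ such that every vertex of $V(G-Y)\setminus (N_G(Y)\cap Z)$ has a color appearing exactly once (under $\phi$) among its neighbors in $G-Y$. *)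

(* A finite simple graph is a symmetric irreflexive relation
   e : rel T on a finType T. *)
From mathcomp Require Import all_boot.
Set Implicit Arguments. Unset Strict Implicit. Unset Printing Implicit Defensive.

Section Graph.
Variables (T : finType) (e : rel T).

Definition nbhd (v : T) : {set T} := [set u | e v u].
Definition deg (v : T) : nat := #|nbhd v|.

Definition nbhd_deg (d : nat) (v : T) : {set T} := [set u | e v u & deg u == d].
Definition n_deg (d : nat) (v : T) : nat := #|nbhd_deg d v|.

Definition has_unique_color (c : nat) (f : T -> 'I_c) (A : {set T}) : Prop :=
  exists col : 'I_c, #|[set u in A | f u == col]| = 1.

Definition is_PCF_coloring (c : nat) (f : T -> 'I_c) : Prop :=
  (forall u w, e u w -> f u != f w) /\
  (forall v, nbhd v != set0 -> has_unique_color f (nbhd v)).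

Definition nbhd_del (Y : {set T}) (x : T) : {set T} := [set u | e x u & u \notin Y].
Definition deg_del (Y : {set T}) (x : T) : nat := #|nbhd_del Y x|.

Definition Zset (Y : {set T}) : {set T} := [set x | (x \notin Y) & deg_del Y x == 2].

Definition nbhd_set (Y : {set T}) : {set T} := [set x | [exists y in Y, e x y]].

(* semi-PCF c-coloring of (G, Y): a colouring of G - Y (values of f on Y are
   irrelevant) *)
Definition is_semiPCF_coloring (c : nat) (Y : {set T}) (f : T -> 'I_c) : Prop :=
  (forall u w, u \notin Y -> w \notin Y -> e u w -> f u != f w) /\
  (forall x, x \notin Y -> x \notin (nbhd_set Y :&: Zset Y) ->
     has_unique_color f (nbhd_del Y x)).

End Graph.

From mathcomp Require Import all_boot zify.
Set Implicit Arguments. Unset Strict Implicit. Unset Printing Implicit Defensive.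

(* Suppose, to the contrary, that the neighbours of v, charged 0, 1 or 2
   according as their degree is 1, 2 or 3, or at least 4, carry total charge
   2d(v) - 2n_1(v) - n_2(v) - n_3(v) < c.  Keep the semi-PCF colouring f
   outside Y and give v a colour alpha avoiding charge(w) colours for each
   neighbour w: f(w) and the unique colour around w if w lies outside Y, and
   f of the other neighbour of w otherwise.  Then colour the low-degree
   neighbours of v greedily, the neighbour u0 of degree 2 or 3 first.  Each of
   them has at most two neighbours besides v, each forbidding at most two
   colours, plus alpha and the colours reserved to keep a unique colour at v;
   as c >= 7 this leaves a free colour.  A vertex of G - Y without a unique
   colour lies in N(Y) and has two neighbours in G - Y of the same colour;
   v, or its first low-degree neighbour, then supplies the unique colour. *)


Lemma greedy_choice (T : finType) (c : nat) (rk : T -> nat)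
    (F : T -> (T -> 'I_c) -> {set 'I_c}) (g0 : T -> 'I_c) :
  injective rk ->
  (forall u g, #|F u g| < c) ->
  (forall u g g', (forall w, rk w < rk u -> g w = g' w) -> F u g = F u g') ->
  exists g, forall u, g u \notin F u g.
Proof.
move=> rk_inj F_small F_local.
suff step n : exists g, forall u, rk u < n -> g u \notin F u g.
  have [g Hg] := step (\max_u rk u).+1.
  by exists g => u; apply: Hg; rewrite ltnS (leq_bigmax u).
elim: n => [|n [g Hg]]; first by exists g0.
have [u1 /eqP rk_u1|rk_neq] := pickP (fun u => rk u == n); last first.
  exists g => u; rewrite ltnS leq_eqVlt => /orP[/eqP rk_u|]; last exact: Hg.
  by have := rk_neq u; rewrite rk_u eqxx.
have [col col_free] : exists col, col \notin F u1 g.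
  have : 0 < #|~: F u1 g|.
    by have := F_small u1 g; have := cardsC (F u1 g); rewrite card_ord; lia.
  by case/card_gt0P => col; rewrite inE; exists col.
pose g' w := if w == u1 then col else g w.
have g'_below w : rk w < n -> g' w = g w.
  by rewrite /g'; case: eqP => // ->; rewrite rk_u1 ltnn.
exists g' => u; rewrite ltnS leq_eqVlt => /orP[/eqP rk_u|lt_u].
  have -> : u = u1 by apply: rk_inj; rewrite rk_u rk_u1.
  by rewrite /g' eqxx (F_local u1 _ g) // rk_u1.
rewrite g'_below // (F_local u _ g) ?Hg // => w lt_w.
exact/g'_below/(ltn_trans lt_w).
Qed.

Lemma card_bigcup_leq (T I : finType) (A : {set I}) (S : I -> {set T}) :
  #|\bigcup_(i in A) S i| <= \sum_(i in A) #|S i|.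
Proof.
elim/big_rec2: _ => [|i B n _ IH]; first by rewrite cards0.
by apply: leq_trans (leq_card_setU _ _) _; rewrite leq_add2l.
Qed.

Section UniqueColor.
Variables (T : finType) (c : nat) (h : T -> 'I_c).

Definition color_class (A : {set T}) (col : 'I_c) := [set u in A | h u == col].

Lemma in_color_class A col t : (t \in color_class A col) = (t \in A) && (h t == col).
Proof. by rewrite inE. Qed.

Definition unique_colorb (A : {set T}) := [exists col, #|color_class A col| == 1].

Lemma unique_colorP A : reflect (has_unique_color h A) (unique_colorb A).
Proof.
by apply: (iffP existsP) => -[col col1]; exists col; apply/eqP.
Qed.

Definition key_color (A : {set T}) (d : 'I_c) : 'I_c :=
  if [pick col | #|color_class A col| == 1] is Some col then col
  else if [pick u in A] is Some u then h u else d.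

Lemma key_colorP A d :
  has_unique_color h A -> #|color_class A (key_color A d)| = 1.
Proof.
case=> col col1; rewrite /key_color; case: pickP => [? /eqP //|none].
by have := none col; rewrite col1 eqxx.
Qed.

Lemma unique_color_witness (A : {set T}) a :
  a \in A -> {in A, forall t, h t = h a -> t = a} -> has_unique_color h A.
Proof.
move=> aA a_only; exists (h a); apply/eqP/cards1P; exists a.
apply/setP => t; rewrite !inE; apply/andP/eqP => [[tA /eqP]|->]; last by [].
exact: a_only.
Qed.

(* the classes of [h a] and [h z] are disjoint and nonempty: one is a singleton *)
Lemma small_has_unique_color (A : {set T}) a z :
  #|A| <= 3 -> a \in A -> z \in A -> h z != h a -> has_unique_color h A.
Proof.
move=> A3 aA zA hza.
have class_pos x : x \in A -> 0 < #|color_class A (h x)|.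
  by move=> xA; apply/card_gt0P; exists x; rewrite !inE xA eqxx.
have disj : [disjoint color_class A (h a) & color_class A (h z)].
  rewrite -setI_eq0; apply/eqP/setP => t; rewrite !inE.
  by apply/negP => /andP[/andP[_ /eqP ->] /andP[_ /eqP hz]]; rewrite hz eqxx in hza.
have sub : color_class A (h a) :|: color_class A (h z) \subset A.
  by apply/subsetP => t; rewrite !inE => /orP[] /andP[].
have := subset_leq_card sub; move: disj; rewrite -(leq_card_setU _ _).2 => /eqP ->.
have := class_pos a aA; have := class_pos z zA.
case: (#|color_class A (h a)| =P 1) => [a1 _ _ _|a_not1]; first by exists (h a).
by exists (h z); rewrite -/(color_class A (h z)); lia.
Qed.

Lemma key_color_const (A : {set T}) d :
  ~ has_unique_color h A -> #|A| <= 3 -> {in A, forall u, h u = key_color A d}.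
Proof.
move=> not_unique A3; rewrite /key_color.
case: pickP => [col /eqP col1|_]; first by case: not_unique; exists col.
case: pickP => [w wA|noneA] u uA; last by have := noneA u; rewrite uA.
apply/eqP/negPn/negP => huw; apply: not_unique.
exact: small_has_unique_color A3 wA uA huw.
Qed.

End UniqueColor.

Section Charge.
Variables (T : finType) (e : rel T).

Definition charge (w : T) : nat :=
  if deg e w == 1 then 0 else if (deg e w == 2) || (deg e w == 3) then 1 else 2.

Lemma n_deg_sum k v : n_deg e k v = \sum_(w in nbhd e v) (deg e w == k).
Proof.
rewrite /n_deg /nbhd_deg -sum1dep_card big_mkcondr /=.
by apply: eq_big => [w|w _]; rewrite ?inE //; case: (_ == k).
Qed.

Lemma sum_charge v :
  \sum_(w in nbhd e v) charge w + (2 * n_deg e 1 v + n_deg e 2 v + n_deg e 3 v)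
  = 2 * deg e v.
Proof.
rewrite !n_deg_sum big_distrr -!big_split /deg mulnC -sum_nat_const /=.
apply: eq_bigr => w _; rewrite /charge -/(deg e w).
by case: (deg e w) => [|[|[|[|d]]]].
Qed.
End Charge.

Section PCFExtension.
Variables (T : finType) (e : rel T).
Hypotheses (e_sym : symmetric e) (e_irr : irreflexive e).
Variables (c : nat) (v u0 : T) (f : T -> 'I_c).
Hypotheses (c_ge7 : 7 <= c) (vu0 : e v u0).
Hypothesis u0_deg : (deg e u0 == 2) || (deg e u0 == 3).

Definition low := nbhd_deg e 1 v :|: nbhd_deg e 2 v :|: nbhd_deg e 3 v.
Definition Y := [set v] :|: nbhd_deg e 1 v :|: nbhd_deg e 2 v :|: nbhd_deg e 3 v.
Definition high := nbhd e v :\: low.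

Hypothesis f_semiPCF : is_semiPCF_coloring e Y f.
Hypothesis charge_small : \sum_(w in nbhd e v) charge e w < c.

Lemma in_nbhd x y : (y \in nbhd e x) = e x y.
Proof. by rewrite inE. Qed.

Lemma in_low x : (x \in low) = e v x && [|| deg e x == 1, deg e x == 2 | deg e x == 3].
Proof. by rewrite !inE; case: (e v x); rewrite /= ?orbA. Qed.

Lemma notin_Y x : (x \notin Y) = (x != v) && (x \notin low).
Proof. by rewrite /Y /low !inE !negb_or !andbA. Qed.

Lemma low_adj x : x \in low -> e v x.
Proof. by rewrite in_low => /andP[]. Qed.

Lemma v_notin_low : v \notin low.
Proof. by apply/negP => /low_adj; rewrite e_irr. Qed.

Lemma low_deg x : x \in low -> deg e x <= 3.
Proof. by rewrite in_low => /andP[_ /or3P[] /eqP ->]. Qed.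

Lemma u0_low : u0 \in low.
Proof. by rewrite in_low vu0; case/orP: u0_deg => ->; rewrite ?orbT. Qed.

Lemma v_in_nbhd_low w : w \in low -> v \in nbhd e w.
Proof. by move/low_adj; rewrite in_nbhd e_sym. Qed.

Lemma nbhd_notin_Y x : x \notin low -> x \in nbhd e v -> x \notin Y.
Proof.
move=> xL; rewrite notin_Y xL in_nbhd andbT => vx.
by apply: contraTneq vx => ->; rewrite e_irr.
Qed.

Lemma in_high x : (x \in high) = (x \notin low) && e v x.
Proof. by rewrite in_setD in_nbhd. Qed.

Lemma adj_notin_Y x : x \notin Y -> e v x -> x \in high.
Proof. by rewrite notin_Y => /andP[_ xL] vx; rewrite inE xL in_nbhd. Qed.

Definition key x := key_color f (nbhd_del e Y x) (f x).
Definition good x := unique_colorb f (nbhd_del e Y x).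

Lemma good_key x : good x -> #|color_class f (nbhd_del e Y x) (key x)| = 1.
Proof. by move/unique_colorP; apply: key_colorP. Qed.

(* [x] then lies in [N_G(Y) :&: Z]: its two neighbours in [G - Y] share a colour *)
Lemma bad_key x : x \notin Y -> ~~ good x ->
  x \in nbhd_set e Y /\ {in nbhd_del e Y x, forall u, f u = key x}.
Proof.
move=> xY /unique_colorP not_unique.
have : x \in nbhd_set e Y :&: Zset e Y.
  by apply/negPn/negP => xZ; apply/not_unique/f_semiPCF.2.
rewrite inE => /andP[xN]; rewrite inE => /andP[_ /eqP deg2]; split=> //.
by apply: key_color_const => //; move: deg2; rewrite /deg_del => ->.
Qed.

(* [u0] is ranked first because every other vertex of [low] must avoid [g u0] *)
Definition rk u := if u == u0 then 0 else (enum_rank u).+1.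

Lemma rk_inj : injective rk.
Proof.
move=> a b; rewrite /rk; case: eqP => [->|_]; case: eqP => [->|_] //.
by move=> [] /val_inj /enum_rank_inj.
Qed.

Lemma rk_u0 u : u != u0 -> rk u0 < rk u.
Proof. by move=> /negbTE uu0; rewrite /rk eqxx uu0. Qed.

Definition low_nbrs x := [set y in low | e x y].
Definition first_low x :=
  odflt v [pick y in low_nbrs x | [forall z in low_nbrs x, rk y <= rk z]].

Lemma first_lowP x y :
  y \in low_nbrs x -> first_low x \in low_nbrs x /\ rk (first_low x) <= rk y.
Proof.
move=> yN; rewrite /first_low; case: pickP => [d /andP[dN /forall_inP d_min]|none].
  by split=> //; apply: d_min.
case: (arg_minnP rk yN) => d dN d_min; have /negbT := none d.
by rewrite /= [d \in _]dN => /forall_inPn [z zN]; rewrite d_min.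
Qed.

Definition second_nbr w := [pick z in nbhd e w :\ v].

Definition forbid_v w : {set 'I_c} :=
  if w \in low then (if second_nbr w is Some z then [set f z] else set0)
  else [set f w; key w].

Lemma card_forbid_v w : w \in nbhd e v -> #|forbid_v w| <= charge e w.
Proof.
move=> wN; rewrite /forbid_v /charge; case: ifP => wL; last first.
  move: wL; rewrite in_low -in_nbhd wN /= => /negbT.
  rewrite !negb_or => /and3P[/negbTE-> /negbTE-> /negbTE->].
  by rewrite cards2; case: (_ != _).
case: eqP => [deg1|_]; last first.
  by case: second_nbr => [z|]; rewrite ?cards1 ?cards0; case: ifP.
have -> : second_nbr w = None.
  rewrite /second_nbr; case: pickP => [z|//]; move: deg1.
  rewrite /deg (cardsD1 v) v_in_nbhd_low // add1n => -[] /eqP.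
  by rewrite cards_eq0 => /eqP ->; rewrite inE.
by rewrite cards0.
Qed.

Definition alpha := odflt (f v) [pick col in ~: \bigcup_(w in nbhd e v) forbid_v w].

Lemma alpha_free : alpha \notin \bigcup_(w in nbhd e v) forbid_v w.
Proof.
rewrite /alpha; case: pickP => [col|none]; first by rewrite inE.
have : 0 < #|~: \bigcup_(w in nbhd e v) forbid_v w|.
  have := card_bigcup_leq (nbhd e v) forbid_v.
  have : \sum_(w in nbhd e v) #|forbid_v w| <= \sum_(w in nbhd e v) charge e w.
    exact: leq_sum card_forbid_v.
  have := cardsC (\bigcup_(w in nbhd e v) forbid_v w).
  by rewrite card_ord; lia.
by case/card_gt0P => col; have := none col => /= ->.
Qed.

Lemma alpha_high w : w \in high -> (alpha != f w) && (alpha != key w).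
Proof.
rewrite inE => /andP[wL wN]; apply: contraNT alpha_free; rewrite negb_and !negbK.
move=> hit; apply/bigcupP; exists w => //; rewrite /forbid_v (negbTE wL) !inE.
by case/orP: hit => ->; rewrite ?orbT.
Qed.

Lemma alpha_second w z : w \in low -> second_nbr w = Some z -> alpha != f z.
Proof.
move=> wL wz; apply: contraNneq alpha_free => ->; apply/bigcupP; exists w.
  by rewrite in_nbhd low_adj.
by rewrite /forbid_v wL wz set11.
Qed.

Lemma card_high : 2 * #|high| + 1 < c.
Proof.
apply: leq_ltn_trans charge_small.
rewrite (bigID (mem low)) /= [leqRHS]addnC leq_add //.
  rewrite mulnC -sum_nat_const; apply: eq_leq; apply: eq_big => [w|w].
    by rewrite inE andbC.
  rewrite inE => /andP[wL wN]; move: wL; rewrite /charge in_low -in_nbhd wN /=.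
  by rewrite !negb_or => /and3P[/negbTE-> /negbTE-> /negbTE->].
rewrite (bigD1 u0) /=; last by rewrite in_nbhd vu0 u0_low.
by rewrite /charge; case/orP: u0_deg => /eqP ->.
Qed.

(* A low neighbour [u] of [x] outside [Y] must avoid the key colour of [x],
   except when [x] lacks a unique colour in [G - Y] and is not adjacent to [v]:
   then only the first low neighbour of [x] avoids it, and the others avoid
   the colour of that first one. *)
Definition avoids_key u x := [|| good x, e v x | u == first_low x].

Definition forbid_nbr u (g : T -> 'I_c) x : {set 'I_c} :=
  if x \in low then (if rk x < rk u then [set g x] else set0)
  else [set f x; if avoids_key u x then key x else g (first_low x)].

(* colours kept off [u] so that [v] retains a unique colour: the unique colour
   of [f] on [high] if there is one, and otherwise the colour of [u0] *)
Definition reserve u (g : T -> 'I_c) : {set 'I_c} :=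
  if unique_colorb f high then [set key_color f high (f v)]
  else if u == u0 then f @: high else [set g u0].

Definition forbid u (g : T -> 'I_c) : {set 'I_c} :=
  if u \in low then
    alpha |: (reserve u g :|: \bigcup_(x in nbhd e u :\ v) forbid_nbr u g x)
  else set0.

Lemma card_reserve u g : #|reserve u g| + 5 < c.
Proof.
rewrite /reserve; case: unique_colorP => [_|not_unique]; first by rewrite cards1; lia.
case: ifP => _; last by rewrite cards1; lia.
have [high3|high4] := leqP #|high| 3.
  have : f @: high \subset [set key_color f high (f v)].
    apply/subsetP => _ /imsetP[w wH ->]; rewrite inE.
    by rewrite (key_color_const (f v) not_unique high3 wH).
  by move/subset_leq_card; rewrite cards1 => /leq_add/(_ (leqnn 5))/leq_ltn_trans; apply.
apply: leq_ltn_trans (leq_add (leq_imset_card f high) (leqnn 5)) _.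
by have := card_high; lia.
Qed.

Lemma card_forbid u g : #|forbid u g| < c.
Proof.
rewrite /forbid; case: ifP => uL; last by rewrite cards0; lia.
have nbr2 : #|nbhd e u :\ v| <= 2.
  by have := low_deg uL; rewrite /deg (cardsD1 v) v_in_nbhd_low.
have : \sum_(x in nbhd e u :\ v) #|forbid_nbr u g x| <= \sum_(x in nbhd e u :\ v) 2.
  apply: leq_sum => x _; rewrite /forbid_nbr; case: ifP => _.
    by case: ifP; rewrite ?cards1 ?cards0.
  by rewrite cards2; case: (_ != _).
rewrite sum_nat_const => sum2.
have := card_bigcup_leq (nbhd e u :\ v) (forbid_nbr u g).
have := leq_card_setU (reserve u g) (\bigcup_(x in nbhd e u :\ v) forbid_nbr u g x).
move/leqifP; case: ifP => _ => [/eqP|] cardU.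
all: by rewrite cardsU1; have := card_reserve u g; lia.
Qed.

Lemma forbid_local u g g' :
  (forall w, rk w < rk u -> g w = g' w) -> forbid u g = forbid u g'.
Proof.
move=> g_eq; rewrite /forbid; case: ifP => // uL; congr (_ |: (_ :|: _)).
  by rewrite /reserve; case: ifP => // _; case: eqP => // /eqP /rk_u0 /g_eq ->.
apply: eq_bigr => x; rewrite in_setD1 => /andP[_ xN]; rewrite /forbid_nbr.
case: ifP => _; first by case: ifP => // /g_eq ->.
case: ifP => keyed //; rewrite g_eq //.
have uN : u \in low_nbrs x by rewrite inE uL e_sym -in_nbhd.
have [_ first_le] := first_lowP uN.
rewrite ltn_neqAle first_le andbT; apply: contraFN keyed => /eqP /rk_inj <-.
by rewrite /avoids_key eqxx !orbT.
Qed.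

Lemma exists_low_coloring : exists g : T -> 'I_c, forall u, g u \notin forbid u g.
Proof. exact: greedy_choice (fun _ => f v) rk_inj card_forbid forbid_local. Qed.

Section Extension.
Variable g : T -> 'I_c.
Hypothesis g_free : forall u, g u \notin forbid u g.

Definition pcf x := if x == v then alpha else if x \in low then g x else f x.

Lemma pcf_v : pcf v = alpha.
Proof. by rewrite /pcf eqxx. Qed.

Lemma pcf_low u : u \in low -> pcf u = g u.
Proof.
by move=> uL; rewrite /pcf uL; case: eqP => // uv; rewrite uv (negbTE v_notin_low) in uL.
Qed.

Lemma pcf_out x : x \notin Y -> pcf x = f x.
Proof. by rewrite notin_Y /pcf => /andP[/negbTE-> /negbTE->]. Qed.

Lemma g_free_low u : u \in low ->
  [/\ g u != alpha, g u \notin reserve u g &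
      forall x, x \in nbhd e u :\ v -> g u \notin forbid_nbr u g x].
Proof.
move=> uL; have := g_free u; rewrite /forbid uL !inE negb_or => /andP[-> /norP[-> nbr]].
by split=> // x xN; apply: contra nbr => hit; apply/bigcupP; exists x.
Qed.

Lemma g_low_nbr u x : u \in low -> x \in low -> e u x -> rk x < rk u -> g u != g x.
Proof.
move=> uL xL ux lt; have [_ _ /(_ x)] := g_free_low uL.
rewrite /forbid_nbr xL lt in_setD1 in_nbhd ux andbT inE.
by apply; apply: contraTneq xL => ->; exact: v_notin_low.
Qed.

Lemma g_out_nbr u x : u \in low -> e u x -> x \notin Y ->
  (g u != f x) && (g u != if avoids_key u x then key x else g (first_low x)).
Proof.
move=> uL ux; rewrite notin_Y => /andP[xv xL]; have [_ _ /(_ x)] := g_free_low uL.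
by rewrite /forbid_nbr (negbTE xL) in_setD1 xv in_nbhd ux !inE negb_or; apply.
Qed.

Lemma pcf_proper_v b : e v b -> pcf v != pcf b.
Proof.
move=> vb; rewrite pcf_v; case: (boolP (b \in low)) => bL.
  by have [gb _ _] := g_free_low bL; rewrite pcf_low // eq_sym.
have bY : b \notin Y by apply: nbhd_notin_Y; rewrite ?in_nbhd.
by rewrite pcf_out //; case/andP: (alpha_high (adj_notin_Y bY vb)).
Qed.

Lemma pcf_proper_low a b : a \in low -> e a b -> b != v ->
  (b \in low -> rk b < rk a) -> pcf a != pcf b.
Proof.
move=> aL ab bv rk_lt; rewrite pcf_low //; case: (boolP (b \in low)) => bL.
  by rewrite pcf_low // g_low_nbr // rk_lt.
have bY : b \notin Y by rewrite notin_Y bv.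
by rewrite pcf_out //; case/andP: (g_out_nbr aL ab bY).
Qed.

Lemma pcf_proper a b : e a b -> pcf a != pcf b.
Proof.
move=> ab; have ba : e b a by rewrite e_sym.
have [av | av] := eqVneq a v; first by rewrite av in ab *; apply: pcf_proper_v.
have [bv | bv] := eqVneq b v; first by rewrite bv eq_sym in ba *; apply: pcf_proper_v.
case: (boolP (a \in low)) => aL; case: (boolP (b \in low)) => bL.
- have [lt|lt|/rk_inj eq_ab] := ltngtP (rk a) (rk b).
  + by rewrite eq_sym; apply: pcf_proper_low.
  + exact: pcf_proper_low.
  + by move: ab; rewrite eq_ab e_irr.
- by apply: pcf_proper_low => //; rewrite (negbTE bL).
- by rewrite eq_sym; apply: pcf_proper_low => //; rewrite (negbTE aL).
have aY : a \notin Y by rewrite notin_Y av.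
have bY : b \notin Y by rewrite notin_Y bv.
by rewrite !pcf_out //; apply: f_semiPCF.1.
Qed.

Lemma pcf_unique_v : has_unique_color pcf (nbhd e v).
Proof.
have [uniq_high|not_unique] := boolP (unique_colorb f high).
  set eta := key_color f high (f v).
  have eta1 := key_colorP (f v) (elimT (unique_colorP _ _) uniq_high).
  exists eta; rewrite -eta1; apply: eq_card => t.
  rewrite !in_color_class in_high in_nbhd.
  case: (boolP (t \in low)) => tL /=.
    have [_ + _] := g_free_low tL; rewrite pcf_low // /reserve uniq_high inE.
    by move=> /negbTE ->; rewrite andbF.
  case: (boolP (e v t)) => //= vt.
  by rewrite pcf_out // nbhd_notin_Y ?in_nbhd.
apply: (unique_color_witness (a := u0)); first by rewrite in_nbhd.
move=> t; rewrite in_nbhd => vt; rewrite (pcf_low u0_low).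
case: (boolP (t \in low)) => tL.
  rewrite pcf_low //; apply: contra_eq => tu0; have [_ + _] := g_free_low tL.
  by rewrite /reserve (negbTE not_unique) (negbTE tu0) inE.
have tY : t \notin Y by rewrite nbhd_notin_Y ?in_nbhd.
have [_ + _] := g_free_low u0_low; rewrite /reserve (negbTE not_unique) eqxx pcf_out //.
by move=> /negP u0_free ft; case: u0_free; rewrite -ft imset_f // adj_notin_Y.
Qed.

Lemma pcf_unique_low u : u \in low -> has_unique_color pcf (nbhd e u).
Proof.
move=> uL; have vN := v_in_nbhd_low uL.
case uz: (second_nbr u) => [z|].
  have : z \in nbhd e u :\ v by move: uz; rewrite /second_nbr; case: pickP => // ? ? [<-].
  rewrite in_setD1 => /andP[zv zN].
  apply: (small_has_unique_color (low_deg uL) vN zN); rewrite pcf_v.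
  case: (boolP (z \in low)) => zL; first by have [] := g_free_low zL; rewrite pcf_low.
  by rewrite pcf_out ?notin_Y ?zv // eq_sym (alpha_second uL uz).
apply: (unique_color_witness vN) => t tN _; apply/eqP; apply: contraT => tv.
by move: uz; rewrite /second_nbr; case: pickP => // /(_ t); rewrite in_setD1 tv tN.
Qed.

Lemma pcf_unique_out x : x \notin Y -> has_unique_color pcf (nbhd e x).
Proof.
move=> xY; have [gx|bad] := boolP (good x).
  exists (key x); rewrite -(good_key gx); apply: eq_card => t.
  rewrite !in_color_class in_nbhd inE; case: (boolP (e x t)) => //= xt.
  have tx : e t x by rewrite e_sym.
  case: (boolP (t \in Y)) => tY /=; last by rewrite pcf_out.
  apply/negbTE; move: tY; rewrite -[t \in Y]negbK notin_Y negb_and !negbK.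
  case/orP => [/eqP tv | tL]; last first.
    by rewrite pcf_low //; case/andP: (g_out_nbr tL tx xY) => _; rewrite /avoids_key gx.
  by rewrite tv pcf_v; rewrite tv in tx; case/andP: (alpha_high (adj_notin_Y xY tx)).
have [+ key_const] := bad_key xY bad; rewrite inE => /exists_inP[y yY xy].
have [vx|not_vx] := boolP (e v x).
  apply: (unique_color_witness (a := v)); first by rewrite in_nbhd e_sym.
  move=> t; rewrite in_nbhd => xt; rewrite pcf_v; apply: contra_eq => tv.
  case: (boolP (t \in low)) => tL; first by have [] := g_free_low tL; rewrite pcf_low.
  have tY : t \notin Y by rewrite notin_Y tv.
  rewrite pcf_out // key_const; last by rewrite in_set xt tY.
  by case/andP: (alpha_high (adj_notin_Y xY vx)) => _; rewrite eq_sym.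
have yL : y \in low.
  move: yY; rewrite -[y \in Y]negbK notin_Y negb_and !negbK => /orP[/eqP yv|//].
  by rewrite -yv e_sym xy in not_vx.
have yN : y \in low_nbrs x by rewrite inE yL xy.
have [dN _] := first_lowP yN.
move: dN; rewrite inE => /andP[dL xd].
apply: (unique_color_witness (a := first_low x)); first by rewrite in_nbhd.
move=> t; rewrite in_nbhd => xt; have tx : e t x by rewrite e_sym.
rewrite (pcf_low dL); have [tv|tv] := eqVneq t v; first by rewrite -tv e_sym xt in not_vx.
case: (boolP (t \in low)) => tL.
  rewrite pcf_low //; apply: contra_eq => td; case/andP: (g_out_nbr tL tx xY) => _.
  by rewrite /avoids_key (negbTE bad) (negbTE not_vx) (negbTE td).
have tY : t \notin Y by rewrite notin_Y tv.
have dx : e (first_low x) x by rewrite e_sym.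
rewrite pcf_out // key_const; last by rewrite in_set xt tY.
apply: contra_eq => _.
by case/andP: (g_out_nbr dL dx xY) => _; rewrite /avoids_key eqxx !orbT eq_sym.
Qed.

Lemma pcf_PCF : is_PCF_coloring e pcf.
Proof.
split=> [a b|x _]; first exact: pcf_proper.
have [->|xv] := eqVneq x v; first exact: pcf_unique_v.
have [xL|xL] := boolP (x \in low); first exact: pcf_unique_low.
by apply: pcf_unique_out; rewrite notin_Y xv.
Qed.

End Extension.

Lemma PCF_extension : exists h : T -> 'I_c, is_PCF_coloring e h.
Proof. by have [g g_free] := exists_low_coloring; exists (pcf g); apply: pcf_PCF. Qed.

End PCFExtension.

Theorem mainTheorem7 (T : finType) (e : rel T)
  (e_sym : symmetric e) (e_irr : irreflexive e)
  (c : nat) (hc : 7 <= c) (v : T)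
  (hv : exists u, e v u && ((deg e u == 2) || (deg e u == 3))) :
  let Y := [set v] :|: nbhd_deg e 1 v :|: nbhd_deg e 2 v :|: nbhd_deg e 3 v in
  ~ (exists f : T -> 'I_c, is_PCF_coloring e f) ->
  (exists f : T -> 'I_c, is_semiPCF_coloring e Y f) ->
  c + (2 * n_deg e 1 v + n_deg e 2 v + n_deg e 3 v) <= 2 * deg e v.
Proof.
move=> Y no_PCF [f f_semiPCF]; have [u0 /andP[vu0 u0_deg]] := hv.
rewrite -(sum_charge e v) leq_add2r leqNgt; apply/negP => charge_small.
exact/no_PCF/(PCF_extension e_sym e_irr hc vu0 u0_deg f_semiPCF charge_small).
Qed.
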